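(* Let $A\in\mathbb{R}^{n\times d}_{\geq 0}$ and $b\in\mathbb{R}^n_{\geq 0}$ such that no column of $A$ is the $0$ vector and no entry of $b$ is equal to $0$. Assume that the (classical) system $Ax=b$, $x\in\mathbb{R}^d_{\geq 0}$ satisfies the dominance condition. Let $\tilde A\in\mathbb{T}^{n\times d}$ and $\tilde b\in\mathbb{T}^n$ be such that no column of $\tilde A$ is the $-\infty$ vector and no entry of $\tilde b$ is equal to $-\infty$. If, for each $j$, the minima $\min_i (b_i/A_{ij})$ and $\min_i(\tilde b_i-\tilde A_{ij})$ are reached by the same indices (with the convention $\lambda/0=+\infty$ for $\lambda>0$), then the feasible bases of the classical system are the same as the tropical bases of the tropical system $\tilde A\odot x=\tilde b$, $x\in\mathbb{T}^d$, and both systems are nondegenerate.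
   Context: $\mathbb{T}=\mathbb{R}\cup\{-\infty\}$ is the max-plus semifield ($\oplus=\max$, $\odot=+$). Classical: a basis of $Ax=b$, $x\geq 0$ is $B\subset[d]$ with $A_B$ (columns in $B$) square nonsingular; its basic solution is the unique solution with support in $B$; $B$ is feasible if this solution is nonnegative and nondegenerate if its support equals $B$. Tropical: a tropical (feasible) basis of $\tilde A\odot x=\tilde b$ is $B\subset[d]$, $|B|=n$, with a bijection $\phi:[n]\to B$ such that for each $i$, $\tilde b_i-\tilde A_{i\phi(i)}\in\mathbb{T}$ is minimal among $\tilde b_k-\tilde A_{k\phi(i)}$, $k\in[n]$ (with $-\infty-(-\infty)=+\infty$); it is nondegenerate if each such minimum is real and uniquely attained, and the system is nondegenerate if all its bases are (classically: all feasible bases nondegenerate). Dominance condition: the normalized matrix $(\operatorname{diag} b)^{-1}A(\operatorname{diag} u)^{-1}$, with $u_j$ the largest entry of column $j$ of $(\operatorname{diag} b)^{-1}A$, which has entries in $[0,1]$ and a $1$ in each column, satisfies (a) some $n\times n$ submatrix covers (entrywise dominates) a permutation matrix, and (b) every $n\times n$ submatrix covering a permutation matrix has all row sums less than $2$. *)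

From HB Require Import structures.
From mathcomp Require Import all_boot all_order all_algebra all_fingroup.
From mathcomp Require Import reals constructive_ereal.
Set Implicit Arguments. Unset Strict Implicit. Unset Printing Implicit Defensive.
Import Order.TTheory GRing.Theory Num.Theory.
Local Open Scope ring_scope.

Section Defs.
Variable R : realType.

(* B is a basis of A x = b: |B| = n and the columns of A in B form a square
   nonsingular matrix (the order of the columns is irrelevant for this). *)
Definition is_basis (n d : nat) (A : 'M[R]_(n, d)) (B : {set 'I_d}) : Prop :=
  exists f : 'I_n -> 'I_d,
    [/\ injective f, f @: setT = B & colsub f A \in unitmx].

Definition supported_solution (n d : nat) (A : 'M[R]_(n, d)) (b : 'cV[R]_n)
    (B : {set 'I_d}) (x : 'cV[R]_d) : Prop :=
  A *m x = b /\ (forall j, j \notin B -> x j 0 = 0).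

(* For a basis B, the basic solution is the unique supported solution. *)
Definition is_basic_solution (n d : nat) (A : 'M[R]_(n, d)) (b : 'cV[R]_n)
    (B : {set 'I_d}) (x : 'cV[R]_d) : Prop :=
  is_basis A B /\ supported_solution A b B x.

Definition feasible_basis (n d : nat) (A : 'M[R]_(n, d)) (b : 'cV[R]_n)
    (B : {set 'I_d}) : Prop :=
  is_basis A B /\
  forall x, is_basic_solution A b B x -> forall j, 0 <= x j 0.

Definition nondegenerate_basis (n d : nat) (A : 'M[R]_(n, d)) (b : 'cV[R]_n)
    (B : {set 'I_d}) : Prop :=
  forall x, is_basic_solution A b B x -> forall j, (x j 0 != 0) = (j \in B).

Definition classical_nondegenerate (n d : nat) (A : 'M[R]_(n, d))
    (b : 'cV[R]_n) : Prop :=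
  forall B, feasible_basis A b B -> nondegenerate_basis A b B.

(* T = R u {-oo}: None stands for -oo *)
Definition tropT := option R.

(* b - a in R u {-oo, +oo}, with the convention -oo - (-oo) = +oo *)
Definition tdiff (b a : tropT) : \bar R :=
  match b, a with
  | Some x, Some y => (x - y)%:E
  | Some _, None => +oo%E
  | None, Some _ => -oo%E
  | None, None => +oo%E
  end.

Definition trop_basis_witness (n d : nat) (At : 'M[tropT]_(n, d))
    (bt : 'cV[tropT]_n) (B : {set 'I_d}) (phi : 'I_n -> 'I_d) : Prop :=
  [/\ injective phi, phi @: setT = B &
      forall i k, (tdiff (bt i 0%R) (At i (phi i)) <= tdiff (bt k 0%R) (At k (phi i)))%E].

Definition trop_basis (n d : nat) (At : 'M[tropT]_(n, d)) (bt : 'cV[tropT]_n)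
    (B : {set 'I_d}) : Prop :=
  #|B| = n /\ exists phi, trop_basis_witness At bt B phi.

Definition trop_nondegenerate_basis (n d : nat) (At : 'M[tropT]_(n, d))
    (bt : 'cV[tropT]_n) (B : {set 'I_d}) : Prop :=
  forall phi, trop_basis_witness At bt B phi ->
  forall i, tdiff (bt i 0%R) (At i (phi i)) \is a fin_num /\
    forall k, k != i ->
      (tdiff (bt i 0%R) (At i (phi i)) < tdiff (bt k 0%R) (At k (phi i)))%E.

Definition tropical_nondegenerate (n d : nat) (At : 'M[tropT]_(n, d))
    (bt : 'cV[tropT]_n) : Prop :=
  forall B, trop_basis At bt B -> trop_nondegenerate_basis At bt B.

Definition col_max (n d : nat) (A : 'M[R]_(n, d)) (b : 'cV[R]_n) (j : 'I_d) : R :=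
  \big[Num.max/0]_(i < n) (A i j / b i 0).

(* (diag b)^-1 A (diag u)^-1 *)
Definition normalized (n d : nat) (A : 'M[R]_(n, d)) (b : 'cV[R]_n) : 'M[R]_(n, d) :=
  \matrix_(i, j) (A i j / (b i 0 * col_max A b j)).

Definition covers_perm (n d : nat) (M : 'M[R]_(n, d)) (f : 'I_n -> 'I_d)
    (s : 'S_n) : Prop :=
  forall i k, (perm_mx s : 'M[R]_n) i k <= colsub f M i k.

Definition dominance (n d : nat) (A : 'M[R]_(n, d)) (b : 'cV[R]_n) : Prop :=
  let M := normalized A b in
  (exists (f : 'I_n -> 'I_d) (s : 'S_n), injective f /\ covers_perm M f s) /\
  (forall (f : 'I_n -> 'I_d) (s : 'S_n), injective f -> covers_perm M f s ->
     forall i, \sum_(k < n) colsub f M i k < 2).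

Definition cratio (b a : R) : \bar R := if a == 0 then +oo%E else (b / a)%:E.

End Defs.

From HB Require Import structures.
From mathcomp Require Import all_boot all_order all_algebra all_fingroup.
From mathcomp Require Import reals constructive_ereal.
From mathcomp Require Import lra.
Import Order.TTheory GRing.Theory Num.Theory.
Local Open Scope ring_scope.
Set Implicit Arguments. Unset Strict Implicit.

(* Let M = diag(b)^-1 A diag(u)^-1 be the normalized matrix. Row i minimizes
   b_i / A_ij exactly when M_ij = 1, so by hypothesis the tropical bases are
   the sets phi([n]) with phi injective and M_{i,phi(i)} = 1 for all i.
   The dominance condition forces every column of M to contain a single 1, and
   makes each such square submatrix strictly diagonally dominant with unit
   diagonal: it is invertible, and the rescaled basic solution, which solves
   N z = 1, is positive, so these sets are nondegenerate feasible bases.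
   Conversely, a feasible basis whose columns miss the 1 of some row i0 yields,
   after exchanging columns, a covered submatrix whose row i0 sums to at least 2. *)

Lemma sum_supported_image (V : nmodType) (I J : finType) (f : I -> J) (F : J -> V) :
  injective f -> (forall j, j \notin f @: setT -> F j = 0) ->
  \sum_j F j = \sum_i F (f i).
Proof.
move=> f_inj F0; rewrite (bigID (mem (f @: setT))) /= [X in _ + X]big1 ?addr0//.
rewrite big_imset /=; last by move=> ? ? _ _; apply: f_inj.
by apply: eq_bigl => i; rewrite in_setT.
Qed.

Lemma sum_ge_two_terms (R : numDomainType) (I : finType) (F : I -> R) p q :
  p != q -> (forall k, 0 <= F k) -> F p + F q <= \sum_k F k.
Proof.
move=> pq F_ge0; rewrite (bigD1 p) //= (bigD1 q) 1?eq_sym //= addrA lerDl.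
exact: sumr_ge0.
Qed.

Section UnitDiagonalDominance.
Variables (R : realFieldType) (n : nat) (N : 'M[R]_n).
Hypotheses (N_diag : forall i, N i i = 1) (N_ge0 : forall i k, 0 <= N i k)
  (N_rowsum : forall i, \sum_k N i k < 2).

Let off_diag i := \sum_(k | k != i) N i k.

Let off_diag_ge0_lt1 i : 0 <= off_diag i < 1.
Proof.
have := N_rowsum i; rewrite (bigD1 i) //= N_diag => lt2.
by rewrite sumr_ge0 //= -(ltrD2l 1) (lt_le_trans lt2).
Qed.

Let row_splitE i z : \sum_k N i k * z k = z i + \sum_(k | k != i) N i k * z k.
Proof. by rewrite (bigD1 i) //= N_diag mul1r. Qed.

Let row_le i z m : (forall k, z k <= m) -> \sum_k N i k * z k <= z i + off_diag i * m.
Proof.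
move=> z_le; rewrite row_splitE lerD2l /off_diag mulr_suml.
by apply: ler_sum => k _; rewrite ler_wpM2l.
Qed.

Let row_ge i z m : (forall k, m <= z k) -> z i + off_diag i * m <= \sum_k N i k * z k.
Proof.
move=> z_ge; rewrite row_splitE lerD2l /off_diag mulr_suml.
by apply: ler_sum => k _; rewrite ler_wpM2l.
Qed.

(* With i, j the indices of the minimum and maximum of z and r_i, r_j < 1 the
   off-diagonal row sums, rows i and j give z_i >= c - r_i z_j and
   z_j <= c - r_j z_i, whence z_i (1 - r_i r_j) >= c (1 - r_i). *)
Lemma dd_solution_lower_bound c z :
  (forall i, \sum_k N i k * z k = c) -> forall k, exists2 e, 0 < e & c * e <= z k.
Proof.
move=> Nz k.
have [i _ z_min] := @arg_minP _ _ _ k xpredT z isT.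
have [j _ z_max] := @arg_maxP _ _ _ k xpredT z isT.
have := row_le i (fun l => z_max l isT); rewrite Nz => low.
have := row_ge j (fun l => z_min l isT); rewrite Nz => up.
have /andP[ri_ge0 ri_lt1] := off_diag_ge0_lt1 i.
have /andP[rj_ge0 rj_lt1] := off_diag_ge0_lt1 j.
have rirj : 0 < 1 - off_diag i * off_diag j by nra.
exists ((1 - off_diag i) / (1 - off_diag i * off_diag j)).
  by rewrite divr_gt0 // subr_gt0.
apply: le_trans (z_min k _) => //; rewrite mulrA ler_pdivrMr //.
have := ler_wpM2l ri_ge0 up; nra.
Qed.

Lemma dd_solution_pos z : (forall i, \sum_k N i k * z k = 1) -> forall k, 0 < z k.
Proof.
move=> Nz k; have [e e_gt0] := dd_solution_lower_bound Nz k.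
by rewrite mul1r; apply: lt_le_trans.
Qed.

Lemma dd_kernel z : (forall i, \sum_k N i k * z k = 0) -> forall k, z k = 0.
Proof.
move=> Nz k; have [e _] := dd_solution_lower_bound Nz k; rewrite mul0r => z_ge0.
have Nz' i : \sum_k N i k * - z k = 0.
  by under eq_bigr do rewrite mulrN; rewrite sumrN Nz oppr0.
have [e' _] := dd_solution_lower_bound Nz' k; rewrite mul0r oppr_ge0 => z_le0.
exact/le_anti/andP.
Qed.

End UnitDiagonalDominance.

Lemma basis_solution_exists (R : realType) n d (A : 'M[R]_(n, d)) b B :
  is_basis A B -> exists x, supported_solution A b B x.
Proof.
case=> f [f_inj <- f_unit].
exists (colsub f 1%:M *m (invmx (colsub f A) *m b)); split.
  by rewrite !mulmxA mulmx_colsub mulmx1 mulmxV ?mul1mx.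
move=> j j_notin; rewrite mxE big1 // => k _; rewrite !mxE.
have -> : (j == f k) = false by apply: contraNF j_notin => /eqP ->; rewrite imset_f.
by rewrite mulr0n mul0r.
Qed.

Lemma cratio_le (R : realType) (bi ai bk ak : R) :
  0 < bi -> 0 < bk -> 0 < ai -> 0 <= ak ->
  (cratio bi ai <= cratio bk ak)%E = (ak / bk <= ai / bi).
Proof.
move=> bi_gt0 bk_gt0 ai_gt0 ak_ge0; rewrite /cratio gt_eqF //.
have [->|ak_neq0] := eqVneq ak 0; first by rewrite leey mul0r divr_ge0 // ltW.
have ak_gt0 : 0 < ak by rewrite lt_def ak_neq0.
by rewrite lee_fin -(invf_div ai) -(invf_div ak) lef_pV2 // posrE divr_gt0.
Qed.

Definition ones_transversal (R : pzSemiRingType) (n d : nat) (M : 'M[R]_(n, d))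
    (B : {set 'I_d}) : Prop :=
  exists phi : 'I_n -> 'I_d,
    [/\ injective phi, phi @: setT = B & forall i, M i (phi i) = 1].

Section Normalized.
Variables (R : realType) (n d : nat) (A : 'M[R]_(n, d)) (b : 'cV[R]_n).
Hypotheses (A_ge0 : forall i j, 0 <= A i j) (b_ge0 : forall i, 0 <= b i 0)
  (A_col_neq0 : forall j, exists i, A i j != 0) (b_neq0 : forall i, b i 0 != 0).

Local Notation M := (normalized A b).
Local Notation u := (col_max A b).

Lemma b_gt0 i : 0 < b i 0.
Proof. by rewrite lt_def b_neq0 b_ge0. Qed.

Lemma col_max_ge i j : A i j / b i 0 <= u j.
Proof. exact: (@le_bigmax _ _ _ 0 (fun i : 'I_n => A i j / b i 0) i). Qed.

Lemma col_max_gt0 j : 0 < u j.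
Proof.
have [i Aij_neq0] := A_col_neq0 j; apply: lt_le_trans (col_max_ge i j).
by rewrite divr_gt0 ?b_gt0 // lt_def Aij_neq0 A_ge0.
Qed.

Lemma col_maxP i j :
  (A i j / b i 0 = u j) <-> (forall k, A k j / b k 0 <= A i j / b i 0).
Proof.
split=> [-> k | Fi_max]; first exact: col_max_ge.
apply/le_anti; rewrite col_max_ge /=.
by apply: bigmax_le => [|k _]; [exact: divr_ge0 | exact: Fi_max].
Qed.

Lemma normalizedE i j : M i j = A i j / b i 0 / u j.
Proof. by rewrite mxE invfM mulrA. Qed.

Lemma normalized_ge0 i j : 0 <= M i j.
Proof. by rewrite normalizedE !divr_ge0 // ltW // col_max_gt0. Qed.

Lemma normalized_le1 i j : M i j <= 1.
Proof. by rewrite normalizedE ler_pdivrMr ?col_max_gt0 // mul1r col_max_ge. Qed.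

Lemma normalized_eq1 i j :
  (M i j = 1) <-> (forall k, A k j / b k 0 <= A i j / b i 0).
Proof.
rewrite -col_maxP normalizedE; split=> [/divr1_eq //|->].
by rewrite divff // gt_eqF // col_max_gt0.
Qed.

Lemma normalized_col_has1 j : exists i, M i j = 1.
Proof.
have [i0 _] := A_col_neq0 j.
have [i _ i_max] := @arg_maxP _ _ _ i0 xpredT (fun i => A i j / b i 0) isT.
by exists i; apply/normalized_eq1 => k; apply: i_max.
Qed.

Lemma cratio_argminE i j :
  (forall k, (cratio (b i 0%R) (A i j) <= cratio (b k 0%R) (A k j))%E) <-> M i j = 1.
Proof.
have A_gt0 k : A k j != 0 -> 0 < A k j by rewrite lt_def A_ge0 andbT.
rewrite normalized_eq1; split=> [i_min | i_max k].
  have [k0 Ak0j_neq0] := A_col_neq0 j.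
  have Aij_neq0 : A i j != 0.
    apply/eqP => Aij_eq0; move: (i_min k0).
    by rewrite /cratio Aij_eq0 eqxx (negPf Ak0j_neq0) leye_eq.
  by move=> k; rewrite -cratio_le ?b_gt0 ?A_gt0.
have Aij_neq0 : A i j != 0.
  have [k0 /A_gt0 Ak0j_gt0] := A_col_neq0 j.
  apply: contraTneq (i_max k0) => ->; rewrite mul0r -ltNge.
  by rewrite divr_gt0 ?b_gt0.
by rewrite cratio_le ?b_gt0 ?A_gt0.
Qed.

Lemma normalized_combination (phi : 'I_n -> 'I_d) (w : 'I_n -> R) i :
  \sum_k A i (phi k) * w k = b i 0 * \sum_k M i (phi k) * (u (phi k) * w k).
Proof.
rewrite mulr_sumr; apply: eq_bigr => k _.
rewrite normalizedE !mulrA mulfVK ?gt_eqF ?col_max_gt0 //.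
by rewrite [b i 0 * _]mulrC mulfK.
Qed.

Lemma supported_solution_normalized (f : 'I_n -> 'I_d) x :
  injective f -> supported_solution A b (f @: setT) x ->
  forall i, \sum_k M i (f k) * (u (f k) * x (f k) 0) = 1.
Proof.
move=> f_inj [/colP Ax x_supp] i; have := Ax i; rewrite mxE.
rewrite (sum_supported_image f_inj) => [|j /x_supp ->]; last by rewrite mulr0.
rewrite normalized_combination => bi_sum.
by apply: (mulfI (b_neq0 i)); rewrite mulr1.
Qed.

Hypothesis dom : dominance A b.

Lemma dominance_diag_ones :
  exists2 s : 'I_n -> 'I_d, injective s & forall i, M i (s i) = 1.
Proof.
have [[f [s [f_inj cover]]] _] := dom.
exists (f \o s); first exact: inj_comp f_inj (@perm_inj _ s).
move=> i; apply/le_anti; rewrite normalized_le1 /=.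
by have := cover i (s i); rewrite perm_mxEsub !mxE eqxx.
Qed.

Lemma dominance_rowsum (g : 'I_n -> 'I_d) :
  injective g -> (forall i, M i (g i) = 1) -> forall i, \sum_k M i (g k) < 2.
Proof.
move=> g_inj g_ones i; have [_ rowsum] := dom.
have := rowsum g 1%g g_inj _ i; under eq_bigr do rewrite mxE; apply=> r k.
rewrite [X in _ <= X]mxE perm_mxEsub 2![X in X <= _]mxE perm1.
by case: eqVneq => [<-|_]; rewrite ?g_ones // normalized_ge0.
Qed.

Lemma diag_ones_through i j : M i j = 1 ->
  exists (g : 'I_n -> 'I_d) (a : 'I_n),
    [/\ injective g, forall r, M r (g r) = 1 & g a = j].
Proof.
move=> Mij; have [s s_inj s_ones] := dominance_diag_ones.
case: (pickP (fun a => s a == j)) => [a /eqP saj|j_notin_s].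
  by exists s, a.
exists (fun r => if r == i then j else s r), i; split; last by rewrite eqxx.
- move=> x y /=; case: eqVneq => [->|xi]; case: eqVneq => [->|yi] //.
  + by move=> e; have := j_notin_s y; rewrite /= -e eqxx.
  + by move=> e; have := j_notin_s x; rewrite /= e eqxx.
  + exact: s_inj.
- by move=> r /=; case: eqVneq => [->|].
Qed.

(* A second 1 in column j = g a would give some row r != a two entries 1
   among the columns of g. *)
Lemma normalized_col_one_uniq i i' j : M i j = 1 -> M i' j = 1 -> i = i'.
Proof.
move=> Mij Mi'j; apply/eqP/negP => /negP ii'.
have [g [a [g_inj g_ones gaj]]] := diag_ones_through Mij.
pose r := if a == i then i' else i.
have ra : r != a by rewrite /r; case: (a =P i) => [->|/eqP]; rewrite eq_sym.
have Mrj : M r j = 1 by rewrite /r; case: ifP.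
have := dominance_rowsum g_inj g_ones r; rewrite ltNge => /negP; apply.
have := @sum_ge_two_terms _ _ (fun k => M r (g k)) _ _ ra.
by rewrite /= g_ones gaj Mrj; apply=> k; apply: normalized_ge0.
Qed.

Section Transversal.
Variable phi : 'I_n -> 'I_d.
Hypotheses (phi_inj : injective phi) (phi_ones : forall i, M i (phi i) = 1).

Let N := colsub phi M.

Let N_diag i : N i i = 1. Proof. by rewrite mxE phi_ones. Qed.
Let N_ge0 i k : 0 <= N i k. Proof. by rewrite mxE normalized_ge0. Qed.
Let N_rowsum i : \sum_k N i k < 2.
Proof. by under eq_bigr do rewrite mxE; apply: dominance_rowsum. Qed.

Lemma transversal_solution_pos x :
  supported_solution A b (phi @: setT) x -> forall k, 0 < x (phi k) 0.
Proof.
move=> sol k; have Nz i : \sum_l N i l * (u (phi l) * x (phi l) 0) = 1.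
  rewrite -(supported_solution_normalized phi_inj sol i).
  by apply: eq_bigr => l _; rewrite mxE.
by have := dd_solution_pos N_diag N_ge0 N_rowsum Nz k; rewrite pmulr_rgt0 ?col_max_gt0.
Qed.

Lemma transversal_unitmx : colsub phi A \in unitmx.
Proof.
rewrite -unitmx_tr unitmxE unitfE; apply/negP => /det0P[v /eqP v_neq0 vA].
apply: v_neq0; apply/rowP => k; rewrite mxE.
have Nz i : \sum_l N i l * (u (phi l) * v 0 l) = 0.
  have := congr1 (fun w : 'rV_n => w 0 i) vA; rewrite !mxE.
  under eq_bigr do rewrite !mxE mulrC.
  rewrite normalized_combination => /eqP; rewrite mulf_eq0 (negPf (b_neq0 i)) /=.
  by move/eqP => S0; rewrite -[RHS]S0; apply: eq_bigr => l _; rewrite mxE.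
have /eqP := dd_kernel N_diag N_ge0 N_rowsum Nz k.
by rewrite mulf_eq0 gt_eqF ?col_max_gt0 //= => /eqP.
Qed.

End Transversal.

Lemma ones_transversal_basis B : ones_transversal M B -> is_basis A B.
Proof.
case=> phi [phi_inj phi_B phi_ones]; exists phi; split=> //.
exact: transversal_unitmx.
Qed.

Lemma ones_transversal_feasible B : ones_transversal M B -> feasible_basis A b B.
Proof.
move=> B_tr; split; first exact: ones_transversal_basis.
case: B_tr => phi [phi_inj <- phi_ones] x [_ sol] j.
case: (boolP (j \in phi @: setT)) => [/imsetP[k _ ->]|j_notin].
  exact/ltW/(transversal_solution_pos phi_inj phi_ones sol).
by case: sol => _ ->.
Qed.

Lemma ones_transversal_nondegenerate B :
  ones_transversal M B -> nondegenerate_basis A b B.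
Proof.
case=> phi [phi_inj <- phi_ones] x [_ sol] j.
case: (boolP (j \in phi @: setT)) => [/imsetP[k _ ->]|j_notin].
  by rewrite gt_eqF // (transversal_solution_pos phi_inj phi_ones sol).
by case: sol => _ ->; rewrite ?eqxx.
Qed.

Lemma row_one_maximizing (I : finType) (f : I -> 'I_d) (w : 'I_d -> R) i :
  exists c, M i c = 1 /\ forall k, M i (f k) = 1 -> w (f k) <= w c.
Proof.
case: (pickP (fun k => M i (f k) == 1)) => [k0 Mik0 | no_one].
  have [km /eqP Mikm km_max] :=
    @arg_maxP _ _ _ k0 (fun k => M i (f k) == 1) (fun k => w (f k)) Mik0.
  by exists (f km); split=> // k /eqP; apply: km_max.
have [s _ s_ones] := dominance_diag_ones.
by exists (s i); split=> // k /eqP; rewrite no_one.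
Qed.

(* If row i0 had no 1 among the columns f k, group the columns by the row of
   their unique 1 and replace each group by a column with a 1 in that row that
   is largest in row i0: these columns tau cover the rows, and row i0 of the
   system bounds the off-diagonal part of row i0 of M[., tau] below by 1. *)
Lemma normalized_solution_rows_covered (I : finType) (f : I -> 'I_d) (z : I -> R) :
  (forall k, 0 <= z k) -> (forall i, \sum_k M i (f k) * z k = 1) ->
  forall i, exists k, M i (f k) = 1.
Proof.
move=> z_ge0 Mz i0.
case: (pickP (fun k => M i0 (f k) == 1)) => [k /eqP|i0_uncovered]; first by exists k.
have [g g_ones] := fin_all_exists normalized_col_has1.
have [tau tau_spec] := fin_all_exists (row_one_maximizing f (fun j => M i0 j)).
have tau_ones i : M i (tau i) = 1 := (tau_spec i).1.
have tau_inj : injective tau.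
  by move=> p q tau_pq; apply: (normalized_col_one_uniq (tau_ones p)); rewrite tau_pq.
pose S i := \sum_(k | g (f k) == i) z k.
have S_le1 i : S i <= 1.
  rewrite -(Mz i) (bigID (fun k => g (f k) == i)) /= -[S i]addr0 lerD ?sumr_ge0 //.
    by apply: ler_sum => k /eqP <-; rewrite g_ones mul1r.
  by move=> k _; rewrite mulr_ge0 ?normalized_ge0.
have S_i0 : S i0 = 0.
  rewrite /S big_pred0 // => k; apply/eqP => gk.
  by have := i0_uncovered k; rewrite -gk g_ones eqxx.
have off_diag_ge1 : 1 <= \sum_(i | i != i0) M i0 (tau i).
  rewrite -(Mz i0); apply: (@le_trans _ _ (\sum_i M i0 (tau i) * S i)).
    have -> : \sum_i M i0 (tau i) * S i = \sum_k M i0 (tau (g (f k))) * z k.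
      rewrite (partition_big (g \o f) xpredT) //=; apply: eq_bigr => i _.
      by rewrite mulr_sumr; apply: eq_bigr => k /eqP <-.
    apply: ler_sum => k _; rewrite ler_wpM2r //.
    exact: (tau_spec (g (f k))).2 k (g_ones (f k)).
  rewrite (bigD1 i0) //= S_i0 mulr0 add0r; apply: ler_sum => i _.
  by rewrite -[X in _ <= X]mulr1 ler_wpM2l ?normalized_ge0.
have := dominance_rowsum tau_inj tau_ones i0; rewrite (bigD1 i0) //= tau_ones.
lra.
Qed.

Lemma rows_covered_ones_transversal (f : 'I_n -> 'I_d) :
  injective f -> (forall i, exists k, M i (f k) = 1) -> ones_transversal M (f @: setT).
Proof.
move=> f_inj covered; have [h h_ones] := fin_all_exists covered.
have h_inj : injective h.
  by move=> p q hpq; apply: (normalized_col_one_uniq (h_ones p)); rewrite hpq h_ones.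
exists (f \o h); split=> //; first exact: inj_comp.
apply/setP => j; apply/imsetP/imsetP => [[i _ ->]|[k _ ->]]; first by exists (h i).
by exists (invF h_inj k) => //=; rewrite f_invF.
Qed.

Lemma feasible_ones_transversal B : feasible_basis A b B -> ones_transversal M B.
Proof.
case=> B_basis x_ge0; have [x sol] := basis_solution_exists b B_basis.
case: (B_basis) sol => f [f_inj fB _]; rewrite -fB => sol.
apply: rows_covered_ones_transversal => //.
apply: (@normalized_solution_rows_covered _ _ (fun k => u (f k) * x (f k) 0)).
  move=> k; rewrite mulr_ge0 ?(ltW (col_max_gt0 _)) // (x_ge0 x) //.
  by split; rewrite // -fB.
exact: supported_solution_normalized.
Qed.

End Normalized.

Lemma tdiff_fin_num_le (R : realType) (x y x' y' : tropT R) :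
  x != None -> x' != None -> y' != None -> (tdiff x y <= tdiff x' y')%E ->
  tdiff x y \is a fin_num.
Proof. by case: x => // ?; case: x' => // ?; case: y' => // ?; case: y. Qed.

Section TropicalArgmin.
Variables (R : realType) (n d : nat) (M : 'M[R]_(n, d)).
Variables (At : 'M[tropT R]_(n, d)) (bt : 'cV[tropT R]_n).
Hypothesis argminE : forall i j,
  (forall k, (tdiff (bt i 0%R) (At i j) <= tdiff (bt k 0%R) (At k j))%E) <-> M i j = 1.

Lemma trop_basis_ones_transversal B : trop_basis At bt B <-> ones_transversal M B.
Proof.
split=> [[_ [phi [phi_inj phi_B phi_min]]] | [phi [phi_inj phi_B phi_ones]]].
  by exists phi; split=> // i; apply/argminE => k; apply: phi_min.
split; first by rewrite -phi_B card_imset // cardsT card_ord.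
by exists phi; split=> // i; apply/argminE.
Qed.

Lemma tropical_nondegenerate_of_unique_ones :
  (forall j, exists i, At i j != None) -> (forall i, bt i 0 != None) ->
  (forall i i' j, M i j = 1 -> M i' j = 1 -> i = i') ->
  tropical_nondegenerate At bt.
Proof.
move=> At_col bt_fin ones_uniq B _ phi [_ _ phi_min] i; split.
  have [r Arphi] := At_col (phi i).
  exact: tdiff_fin_num_le (bt_fin i) (bt_fin r) Arphi (phi_min i r).
move=> k; apply: contraNT; rewrite -leNgt => le_ki.
apply/eqP/(ones_uniq _ _ (phi i)); apply/argminE => l; last exact: phi_min.
exact: le_trans le_ki (phi_min i l).
Qed.

End TropicalArgmin.

Theorem proposition4p4 (R : realType) (n d : nat)
  (A : 'M[R]_(n, d)) (b : 'cV[R]_n)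
  (At : 'M[tropT R]_(n, d)) (bt : 'cV[tropT R]_n) :
  (forall i j, 0 <= A i j) ->
  (forall i, 0 <= b i 0) ->
  (forall j, exists i, A i j != 0) ->
  (forall i, b i 0 != 0) ->
  dominance A b ->
  (forall j, exists i, At i j != None) ->
  (forall i, bt i 0 != None) ->
  (forall j i,
     (forall k, (cratio (b i 0%R) (A i j) <= cratio (b k 0%R) (A k j))%E) <->
     (forall k, (tdiff (bt i 0%R) (At i j) <= tdiff (bt k 0%R) (At k j))%E)) ->
  [/\ (forall B : {set 'I_d}, feasible_basis A b B <-> trop_basis At bt B),
      classical_nondegenerate A b &
      tropical_nondegenerate At bt].
Proof.
move=> A_ge0 b_ge0 A_col b_neq0 dom At_col bt_fin same_argmin.
have argminE i j :
    (forall k, (tdiff (bt i 0%R) (At i j) <= tdiff (bt k 0%R) (At k j))%E) <->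
    normalized A b i j = 1.
  apply: iff_trans (iff_sym (same_argmin j i)) _.
  exact: cratio_argminE.
have feasibleE B : feasible_basis A b B <-> ones_transversal (normalized A b) B.
  split; first exact: feasible_ones_transversal.
  exact: ones_transversal_feasible.
split.
- move=> B; apply: iff_trans (feasibleE B) _.
  exact: iff_sym (trop_basis_ones_transversal argminE B).
- by move=> B /feasibleE; apply: ones_transversal_nondegenerate.
- apply: tropical_nondegenerate_of_unique_ones At_col bt_fin _ => //.
  exact: normalized_col_one_uniq.
Qed.
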